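(* Let $G=(V,E)$ be a finite graph of maximum degree $\Delta$ with adjacency matrix $A$, and let $\boldsymbol\lambda\in(0,\infty)^V$ satisfy $\lambda_u<1/\Delta$ for all $u$. Let $B=\mathrm{diag}(1+1/\lambda_u: u\in V)$. Then every vector $\mathbf x\in\mathbb R^V$ with $\mathbf x\ge\mathbf 0$ and $(B+A)\mathbf x\ge\mathbf 1$ satisfies \[ \sum_{u\in V}x_u\ \ge\ \sum_{u\in V}\frac{\lambda_u}{1+(d_u+1)\lambda_u}. \]
   Context: $d_u$ denotes the degree of $u$; vector inequalities are entrywise; $\mathbf 1$ is the all-ones vector. *)

From HB Require Import structures.
From mathcomp Require Import all_boot all_order all_algebra.
Set Implicit Arguments. Unset Strict Implicit. Unset Printing Implicit Defensive.
Import Order.TTheory GRing.Theory Num.Theory.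
Local Open Scope ring_scope.

Definition simple_graph (T : finType) (e : rel T) : Prop :=
  symmetric e /\ irreflexive e.

Definition deg (T : finType) (e : rel T) (u : T) : nat := #|[set v | e u v]|.

Definition max_deg (T : finType) (e : rel T) : nat := (\max_(u : T) deg e u)%N.

Definition adj (R : numDomainType) (T : finType) (e : rel T) (u v : T) : R :=
  if e u v then 1 else 0.

Definition BA_apply (R : numFieldType) (T : finType) (e : rel T)
  (lam x : T -> R) (u : T) : R :=
  (1 + 1 / lam u) * x u + \sum_(v : T) adj R e u v * x v.

From HB Require Import structures.
From mathcomp Require Import all_boot all_order all_algebra.
From mathcomp Require Import lra ring.
Set Implicit Arguments. Unset Strict Implicit. Unset Printing Implicit Defensive.
Import Order.TTheory GRing.Theory Num.Theory.
Local Open Scope ring_scope.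

(* Write M = B + A and Q z = <z, M z>. Since 2 |z_u z_v| <= z_u^2 + z_v^2,
   sum_u (b_u - d_u) z_u^2 <= Q z <= sum_u (b_u + d_u) z_u^2, and b_u > d_u makes M
   positive definite, hence invertible. Let y = M^-1 1; comparing the equations of M y = 1 at
   a minimiser and a maximiser of y shows that a negative minimum would exceed the maximum,
   so y >= 0 (this uses b_u > 1 + Delta). Then
   sum x = <x, M y> = <M x, y> >= sum y. Finally, with t_u = 1 / (b_u + d_u), which is the
   summand of the bound, Q t <= sum t, and expanding 0 <= Q (y - t) gives
   sum y >= 2 sum t - Q t >= sum t. *)

Section Kernel.
Variables (R : fieldType) (T : finType) (K : T -> T -> R).

Lemma kernel_solvable :
  (forall z : T -> R, (forall u, \sum_v K u v * z v = 0) -> forall u, z u = 0) ->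
  forall b : T -> R, exists y : T -> R, forall u, \sum_v K u v * y v = b u.
Proof.
move=> K_inj b.
pose vec (z : T -> R) : 'rV_#|T| := \row_i z (enum_val i).
pose M : 'M[R]_#|T| := \matrix_(i, j) K (enum_val j) (enum_val i).
have vecM z u : (vec z *m M) 0 (enum_rank u) = \sum_v K u v * z v.
  rewrite mxE (reindex _ (onW_bij _ (@enum_val_bij T))) /=.
  by apply: eq_bigr => i _; rewrite !mxE enum_rankK mulrC.
have M_unit : M \in unitmx.
  rewrite -row_free_unit; apply: inj_row_free => w wM0.
  pose z u := w 0 (enum_rank u).
  have w_vec : vec z = w by apply/rowP => i; rewrite mxE /z enum_valK.
  have z0 : forall u, z u = 0.
    by apply: K_inj => u; rewrite -vecM w_vec wM0 mxE.
  by apply/rowP => i; rewrite -w_vec !mxE z0.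
pose y u := (vec b *m invmx M) 0 (enum_rank u).
have vec_y : vec y = vec b *m invmx M by apply/rowP => i; rewrite mxE /y enum_valK.
by exists y => u; rewrite -vecM vec_y mulmxKV // mxE enum_rankK.
Qed.

End Kernel.

Section AdjacencyOperator.
Variables (R : numDomainType) (T : finType) (e : rel T).

Lemma adj_ge0 u v : 0 <= adj R e u v.
Proof. by rewrite /adj; case: (e u v). Qed.

Lemma sum_adj u : \sum_v adj R e u v = (deg e u)%:R.
Proof. by rewrite /adj -big_mkcond /= sumr_const /deg cardsE. Qed.

Lemma sum_adj_le (y : T -> R) (m : R) u :
  (forall v, y v <= m) -> \sum_v adj R e u v * y v <= (deg e u)%:R * m.
Proof.
move=> y_le; rewrite -sum_adj mulr_suml; apply: ler_sum => v _.
by apply: ler_wpM2l; [exact: adj_ge0 | exact: y_le].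
Qed.

Lemma sum_adj_ge (y : T -> R) (m : R) u :
  (forall v, m <= y v) -> (deg e u)%:R * m <= \sum_v adj R e u v * y v.
Proof.
move=> y_ge; rewrite -sum_adj mulr_suml; apply: ler_sum => v _.
by apply: ler_wpM2l; [exact: adj_ge0 | exact: y_ge].
Qed.

Definition diag_adj_apply (c z : T -> R) (u : T) : R :=
  c u * z u + \sum_v adj R e u v * z v.

Lemma diag_adj_applyE c z u :
  diag_adj_apply c z u = \sum_v ((u == v)%:R * c u + adj R e u v) * z v.
Proof.
rewrite /diag_adj_apply; under [RHS]eq_bigr do rewrite mulrDl.
rewrite big_split /=; congr (_ + _).
rewrite (bigD1 u) //= eqxx mul1r big1 ?addr0 // => v.
by rewrite eq_sym => /negbTE->; rewrite mul0r mul0r.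
Qed.

Lemma diag_adj_applyB c a b u :
  diag_adj_apply c (fun v => a v - b v) u =
  diag_adj_apply c a u - diag_adj_apply c b u.
Proof. by rewrite !diag_adj_applyE -sumrB; apply: eq_bigr => v _; rewrite mulrBr. Qed.

Hypothesis e_sym : symmetric e.

Lemma adjC u v : adj R e u v = adj R e v u.
Proof. by rewrite /adj e_sym. Qed.

Lemma sum_diag_adj_applyC c a b :
  \sum_u a u * diag_adj_apply c b u = \sum_u b u * diag_adj_apply c a u.
Proof.
under eq_bigr do rewrite diag_adj_applyE mulr_sumr.
under [RHS]eq_bigr do rewrite diag_adj_applyE mulr_sumr.
rewrite exchange_big /=; apply: eq_bigr => u _; apply: eq_bigr => v _.
rewrite adjC eq_sym mulrCA mulrA; case: eqP => [->|_]; last by rewrite !mul0r !add0r mulrC.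
by rewrite mulrC.
Qed.

Lemma sum_le_of_diag_adj_apply c x y :
  (forall u, diag_adj_apply c y u = 1) -> (forall u, 0 <= y u) ->
  (forall u, 1 <= diag_adj_apply c x u) -> \sum_u y u <= \sum_u x u.
Proof.
move=> y1 y_ge0 x_ge1.
have -> : \sum_u x u = \sum_u x u * diag_adj_apply c y u.
  by apply: eq_bigr => u _; rewrite y1 mulr1.
rewrite sum_diag_adj_applyC; apply: ler_sum => u _.
by rewrite -{1}[y u]mulr1; apply: ler_wpM2l.
Qed.

End AdjacencyOperator.

Section QuadraticForm.
Variables (R : realDomainType) (T : finType) (e : rel T).
Hypothesis e_sym : symmetric e.

Definition diag_adj_form (c z : T -> R) : R :=
  \sum_u z u * diag_adj_apply e c z u.

Lemma diag_adj_formE c z : diag_adj_form c z =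
  \sum_u c u * z u ^+ 2 + \sum_u \sum_v adj R e u v * (z u * z v).
Proof.
rewrite /diag_adj_form -big_split /=; apply: eq_bigr => u _.
rewrite mulrDr mulr_sumr mulrCA expr2; congr (_ + _).
by apply: eq_bigr => v _; rewrite mulrCA.
Qed.

Lemma sum_adj_sqrD (z : T -> R) :
  \sum_u \sum_v adj R e u v * (z u ^+ 2 + z v ^+ 2) =
  2 * \sum_u (deg e u)%:R * z u ^+ 2.
Proof.
have sum_left : \sum_u \sum_v adj R e u v * z u ^+ 2 = \sum_u (deg e u)%:R * z u ^+ 2.
  by apply: eq_bigr => u _; rewrite -mulr_suml sum_adj.
have sum_right : \sum_u \sum_v adj R e u v * z v ^+ 2 = \sum_u (deg e u)%:R * z u ^+ 2.
  rewrite exchange_big /=; apply: eq_bigr => v _.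
  by rewrite -mulr_suml -(sum_adj R e); congr (_ * _); apply: eq_bigr => u _; rewrite adjC.
rewrite mulr2n mulrDl mul1r -{1}sum_left -sum_right -big_split /=.
by apply: eq_bigr => u _; rewrite -big_split /=; apply: eq_bigr => v _; rewrite mulrDr.
Qed.

Lemma sum_adj_mul_le (z : T -> R) :
  \sum_u \sum_v adj R e u v * (z u * z v) <= \sum_u (deg e u)%:R * z u ^+ 2.
Proof.
suff : 2 * \sum_u \sum_v adj R e u v * (z u * z v) <= 2 * \sum_u (deg e u)%:R * z u ^+ 2.
  by lra.
rewrite -sum_adj_sqrD mulr_sumr; apply: ler_sum => u _.
rewrite mulr_sumr; apply: ler_sum => v _.
rewrite mulrCA; apply: ler_wpM2l; first exact: adj_ge0.
have := sqr_ge0 (z u - z v); rewrite sqrrB; lra.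
Qed.

Lemma sum_adj_mul_ge (z : T -> R) :
  - \sum_u (deg e u)%:R * z u ^+ 2 <= \sum_u \sum_v adj R e u v * (z u * z v).
Proof.
suff : - (2 * \sum_u (deg e u)%:R * z u ^+ 2) <= 2 * \sum_u \sum_v adj R e u v * (z u * z v).
  by lra.
rewrite -sum_adj_sqrD -sumrN mulr_sumr; apply: ler_sum => u _.
rewrite -sumrN mulr_sumr; apply: ler_sum => v _.
rewrite mulrCA -mulrN; apply: ler_wpM2l; first exact: adj_ge0.
have := sqr_ge0 (z u + z v); rewrite sqrrD; lra.
Qed.

Lemma diag_adj_form_ge c z :
  \sum_u (c u - (deg e u)%:R) * z u ^+ 2 <= diag_adj_form c z.
Proof.
under eq_bigr do rewrite mulrBl.
rewrite sumrB diag_adj_formE; have := sum_adj_mul_ge z; lra.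
Qed.

Lemma diag_adj_form_le c z :
  diag_adj_form c z <= \sum_u (c u + (deg e u)%:R) * z u ^+ 2.
Proof.
under [X in _ <= X]eq_bigr do rewrite mulrDl.
rewrite big_split diag_adj_formE /=; have := sum_adj_mul_le z; lra.
Qed.

End QuadraticForm.

Section NonnegativeSolution.
Variables (R : realDomainType) (T : finType) (e : rel T) (D : nat) (c y : T -> R).
Hypothesis deg_le : forall u, (deg e u <= D)%N.
Hypothesis c_gt : forall u, D.+1%:R < c u.
Hypothesis y_eq1 : forall u, diag_adj_apply e c y u = 1.

Lemma diag_adj_solution_ge0 u : 0 <= y u.
Proof.
have [u0 _ y_ge] := @arg_minP _ _ T u xpredT y isT.
have [w _ y_le] := @arg_maxP _ _ T u xpredT y isT.
rewrite leNgt; apply/negP => yu_lt0.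
set m := y u0 in y_ge; set M := y w in y_le.
have m_lt0 : m < 0 := le_lt_trans (y_ge u isT) yu_lt0.
have deg_leD v : (deg e v)%:R <= D%:R :> R by rewrite ler_nat.
have D1 : D.+1%:R = D%:R + 1 :> R by rewrite -addn1 natrD.
have S_u0 := sum_adj_le e u0 (fun v => y_le v isT).
have S_w := sum_adj_ge e w (fun v => y_ge v isT).
have eq_u0 := y_eq1 u0; have eq_w := y_eq1 w.
rewrite /diag_adj_apply -/m in eq_u0; rewrite /diag_adj_apply -/M in eq_w.
have M_ge0 : 0 <= M.
  rewrite leNgt; apply/negP => M_lt0.
  have : (deg e u0)%:R * M <= 0 by rewrite mulr_ge0_le0 // ltW.
  have : c u0 * m < 0 by rewrite pmulr_rlt0 // (lt_trans _ (c_gt u0)) ?ltr0Sn.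
  lra.
have at_min : 1 < D.+1%:R * m + D%:R * M.
  have : (deg e u0)%:R * M <= D%:R * M by rewrite ler_wpM2r.
  have : c u0 * m < D.+1%:R * m by rewrite ltr_nM2r.
  lra.
have at_max : D.+1%:R * M + D%:R * m <= 1.
  have : D%:R * m <= (deg e w)%:R * m by rewrite ler_wnM2r // ltW.
  have : D.+1%:R * M <= c w * M by rewrite ler_wpM2r // ltW.
  lra.
have := y_ge w isT; rewrite -/M D1 in at_min at_max *; lra.
Qed.

End NonnegativeSolution.

Section PositiveDefinite.
Variables (R : realFieldType) (T : finType) (e : rel T) (c : T -> R).
Hypothesis e_sym : symmetric e.
Hypothesis c_gt_deg : forall u, (deg e u)%:R < c u.

Lemma diag_adj_form_ge0 z : 0 <= diag_adj_form e c z.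
Proof.
apply: le_trans (diag_adj_form_ge e_sym c z); apply: sumr_ge0 => u _.
by rewrite mulr_ge0 ?sqr_ge0 // subr_ge0 ltW.
Qed.

Lemma diag_adj_apply_eq0 z : (forall u, diag_adj_apply e c z u = 0) -> forall u, z u = 0.
Proof.
move=> Lz0 u.
have terms_ge0 v (_ : true) : 0 <= (c v - (deg e v)%:R) * z v ^+ 2.
  by rewrite mulr_ge0 ?sqr_ge0 // subr_ge0 ltW.
have sum0 : \sum_v (c v - (deg e v)%:R) * z v ^+ 2 = 0.
  have Q0 : diag_adj_form e c z = 0.
    by rewrite /diag_adj_form big1 // => v _; rewrite Lz0 mulr0.
  apply/eqP; rewrite eq_le sumr_ge0 // andbT -[X in _ <= X]Q0.
  exact: diag_adj_form_ge.
apply/eqP; have /eqP := psumr_eq0P terms_ge0 sum0 (i := u) isT.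
by rewrite mulf_eq0 subr_eq0 gt_eqF //= expf_eq0.
Qed.

Lemma diag_adj_solvable b : exists y, forall u, diag_adj_apply e c y u = b u.
Proof.
have [|y yb] := @kernel_solvable _ _ (fun u v => (u == v)%:R * c u + adj R e u v) _ b.
  by move=> z Lz0; apply: diag_adj_apply_eq0 => u; rewrite diag_adj_applyE Lz0.
by exists y => u; rewrite diag_adj_applyE.
Qed.

Lemma sum_inv_le_sum_diag_adj_solution y :
  (forall u, diag_adj_apply e c y u = 1) ->
  \sum_u (c u + (deg e u)%:R)^-1 <= \sum_u y u.
Proof.
move=> y_eq1; pose t u := (c u + (deg e u)%:R)^-1.
have t_scale u : (c u + (deg e u)%:R) * t u = 1.
  rewrite mulfV // gt_eqF //.
  by have := c_gt_deg u; have : 0 <= (deg e u)%:R :> R by []; lra.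
have Qt : diag_adj_form e c t <= \sum_u t u.
  have -> : \sum_u t u = \sum_u (c u + (deg e u)%:R) * t u ^+ 2.
    by apply: eq_bigr => u _; rewrite expr2 mulrA t_scale mul1r.
  exact: diag_adj_form_le.
have sum_yLy : \sum_u y u * diag_adj_apply e c y u = \sum_u y u.
  by apply: eq_bigr => u _; rewrite y_eq1 mulr1.
have sum_tLy : \sum_u t u * diag_adj_apply e c y u = \sum_u t u.
  by apply: eq_bigr => u _; rewrite y_eq1 mulr1.
have sum_yLt : \sum_u y u * diag_adj_apply e c t u = \sum_u t u.
  by rewrite sum_diag_adj_applyC.
have := diag_adj_form_ge0 (fun u => y u - t u).
rewrite /diag_adj_form.
under eq_bigr do rewrite diag_adj_applyB mulrBl !mulrBr.
rewrite !sumrB sum_yLy sum_tLy sum_yLt -/(diag_adj_form e c t); lra.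
Qed.

End PositiveDefinite.

Theorem mainTheorem7 (R : realFieldType) (T : finType) (e : rel T)
  (lam : T -> R) (x : T -> R) :
  simple_graph e ->
  (forall u, 0 < lam u) ->
  (forall u, lam u * (max_deg e)%:R < 1) ->
  (forall u, 0 <= x u) ->
  (forall u, 1 <= BA_apply e lam x u) ->
  \sum_(u : T) lam u / (1 + ((deg e u).+1)%:R * lam u) <= \sum_(u : T) x u.
Proof.
move=> [e_sym _] lam_gt0 lam_max_deg _ x_ge1.
pose c u := 1 + 1 / lam u.
have deg_le u : (deg e u <= max_deg e)%N by apply: leq_bigmax.
have c_gt u : (max_deg e).+1%:R < c u.
  have lam_inv : lam u * (1 / lam u) = 1 by rewrite mul1r mulfV // gt_eqF.
  move: (lam_max_deg u) (lam_gt0 u); rewrite /c -addn1 natrD; nra.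
have c_gt_deg u : (deg e u)%:R < c u.
  by apply: le_lt_trans (c_gt u); rewrite ler_nat ltnW // ltnS.
have [y y_eq1] := diag_adj_solvable e_sym c_gt_deg (fun=> 1).
have -> : \sum_u lam u / (1 + ((deg e u).+1)%:R * lam u) = \sum_u (c u + (deg e u)%:R)^-1.
  apply: eq_bigr => u _; have := lam_gt0 u; rewrite /c -addn1 natrD => lam_pos.
  have deg_lam_ge0 : 0 <= (deg e u)%:R * lam u by rewrite mulr_ge0 // ltW.
  by field; rewrite !gt_eqF //; lra.
apply: le_trans (sum_inv_le_sum_diag_adj_solution e_sym c_gt_deg y_eq1) _.
apply: (sum_le_of_diag_adj_apply e_sym y_eq1 (diag_adj_solution_ge0 deg_le c_gt y_eq1)).
exact: x_ge1.
Qed.
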